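(* Let $F\dashv G$ be a Galois connection between lattices $\mathcal{L}$ and $\mathcal{L}'$, let $\ell\in\mathcal{L}$, and let $L,L'\subseteq\mathcal{L}$ be finite with $L\downarrow\ell=L'\downarrow\ell$. Then $C_{F\dashv G}(L)\downarrow\ell=C_{F\dashv G}(L')\downarrow\ell$.
   Context: A lattice means a partially ordered set with least element $\bot$ in which any two elements have a least upper bound $\sqcup$; $\bigsqcup S$ denotes the least upper bound of a finite set ($\bigsqcup\emptyset=\bot$). For $S\subseteq\mathcal{L}$, $S\downarrow\ell=\{\jmath\in S : \jmath\sqsubseteq\ell\}$. A Galois connection $F\dashv G$ is a pair $F:\mathcal{L}\to\mathcal{L}'$, $G:\mathcal{L}'\to\mathcal{L}$ with $F(\ell)\sqsubseteq\jmath\iff\ell\sqsubseteq G(\jmath)$. For a function $H$, $H^*(S)=\{H(s):s\in S\}$. The closure set is $C(S)=\{\bigsqcup S' : S'\subseteq S\}$ and $C_{F\dashv G}(S)=G^*(C(F^*(S)))$. *)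

From HB Require Import structures.
From mathcomp Require Import all_boot all_order.
From mathcomp Require Import finmap.
Set Implicit Arguments. Unset Strict Implicit. Unset Printing Implicit Defensive.
Import Order.TTheory.
Local Open Scope order_scope.
Local Open Scope fset_scope.

(* A "lattice" in the paper: a poset with bottom and binary joins:
   bJoinSemilatticeType d. *)

Definition galois_conn {d d' : Order.disp_t}
  {T : bJoinSemilatticeType d} {T' : bJoinSemilatticeType d'}
  (F : T -> T') (G : T' -> T) : Prop :=
  forall (l : T) (j : T'), (F l <= j) = (l <= G j).

Definition down {d} {T : bJoinSemilatticeType d} (S : {fset T}) (l : T) : {fset T} :=
  [fset j in S | j <= l].

Definition closure_set {d} {T : bJoinSemilatticeType d} (S : {fset T}) : {fset T} :=
  [fset (\join_(s <- (S' : {fset T})) s) | S' : {fset T} in fpowerset S].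

Definition closure_FG {d d'} {T : bJoinSemilatticeType d} {T' : bJoinSemilatticeType d'}
  (F : T -> T') (G : T' -> T) (S : {fset T}) : {fset T} :=
  [fset G x | x in closure_set [fset F s | s in S]].

From HB Require Import structures.
From mathcomp Require Import all_boot all_order.
From mathcomp Require Import finmap.

Set Implicit Arguments.
Unset Strict Implicit.
Unset Printing Implicit Defensive.
Import Order.TTheory.
Local Open Scope order_scope.
Local Open Scope fset_scope.

(* If [G (\join S') <= l] with [S' ⊆ F^*(L)], then each [F a ∈ S'] lies below
   [\join S'], so [a <= G (F a) <= G (\join S') <= l] by the Galois connection. *)

Lemma mem_down {d} {T : bJoinSemilatticeType d} (S : {fset T}) (l x : T) :
  (x \in down S l) = (x \in S) && (x <= l).
Proof. by rewrite !inE. Qed.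

Lemma down_subset {d} {T : bJoinSemilatticeType d} (S : {fset T}) (l : T) :
  down S l `<=` S.
Proof. by apply/fsubsetP => x; rewrite mem_down => /andP[]. Qed.

Lemma closure_set_subset {d} {T : bJoinSemilatticeType d} (S1 S2 : {fset T}) :
  S1 `<=` S2 -> closure_set S1 `<=` closure_set S2.
Proof. by rewrite -fpowersetS => /fsubsetP S12; apply: subset_imfset. Qed.

Section GaloisClosure.

Variables (d d' : Order.disp_t).
Variables (T : bJoinSemilatticeType d) (T' : bJoinSemilatticeType d').
Variables (F : T -> T') (G : T' -> T).

Lemma closure_FG_subset (S1 S2 : {fset T}) :
  S1 `<=` S2 -> closure_FG F G S1 `<=` closure_FG F G S2.
Proof.
move=> /fsubsetP S12; apply/subset_imfset/fsubsetP/closure_set_subset.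
exact/subset_imfset.
Qed.

Hypothesis FG : galois_conn F G.

Lemma closure_FG_down (S : {fset T}) (l z : T) :
  z \in closure_FG F G S -> z <= l -> z \in closure_FG F G (down S l).
Proof.
move=> /imfsetP[_ /= /imfsetP[S' /= S'FS ->] ->] Gl.
apply/imfsetP; exists (\join_(s <- S') s) => //=; apply/imfsetP; exists S' => //=.
rewrite fpowersetE; apply/fsubsetP => s S's.
move: S'FS; rewrite fpowersetE => /fsubsetP/(_ s S's)/imfsetP[a /= Sa Fa].
apply/imfsetP; exists a => //=; rewrite mem_down Sa /=.
apply: le_trans Gl; rewrite -FG -Fa.
exact: (@joins_sup_seq _ _ _ _ predT id _ S's).
Qed.

Lemma down_closure_FG (S : {fset T}) (l : T) :
  down (closure_FG F G S) l = down (closure_FG F G (down S l)) l.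
Proof.
apply/eqP; rewrite eqEfsubset; apply/andP; split; apply/fsubsetP => z;
  rewrite !mem_down => /andP[Sz zl]; rewrite zl andbT.
- exact: closure_FG_down.
- exact: (fsubsetP (closure_FG_subset (down_subset S l))) Sz.
Qed.

End GaloisClosure.

Theorem mainTheorem20 (d d' : Order.disp_t)
  (T : bJoinSemilatticeType d) (T' : bJoinSemilatticeType d')
  (F : T -> T') (G : T' -> T) (HFG : galois_conn F G)
  (l : T) (L L' : {fset T}) (HL : down L l = down L' l) :
  down (closure_FG F G L) l = down (closure_FG F G L') l.
Proof. by rewrite (down_closure_FG HFG L) (down_closure_FG HFG L') HL. Qed.
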